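(* Let $f:G\to H$ be a morphism in $\mathbf{Gpd}^{\mathbf{G}}$ equipped with the projective model structure. The following are equivalent: (i) $f$ is a (right) homotopy equivalence; (ii) $f$ is a levelwise weak equivalence (its underlying functor is an equivalence of groupoids) and $f$ induces an isomorphism between the full subgroupoids of fixed points $G_{\mathbf{f}}$ and $H_{\mathbf{f}}$; (iii) $f$ is a levelwise weak equivalence and $f$ induces an isomorphism between $G^{\mathbf{G}}$ and $H^{\mathbf{G}}$; (iv) $f$ is a levelwise weak equivalence and $f$ induces a bijection between the set of fixed points of $G$ and the set of fixed points of $H$.
   Context: $\mathbf{Gpd}^{\mathbf{G}}$ is the category of groupoids equipped with an involution and functors commuting with the involutions. Projective model structure: weak equivalences (resp. fibrations) are the morphisms whose underlying functor is an equivalence (resp. isofibration) of groupoids; cofibrations are the morphisms with the left lifting property against trivial fibrations. A path object for $X$ is a factorization of the diagonal $X\to X\times X$ as a trivial cofibration $X\to PX$ followed by a fibration $PX\to X\times X$. Two morphisms $f,g:A\to X$ are right homotopic if there are a path object $PX$ and $H:A\to PX$ whose composite with $PX\to X\times X$ is $\langle f,g\rangle$. A morphism $f:X\to Y$ is a (right) homotopy equivalence if there is $g:Y\to X$ with $f\circ g$ right homotopic to $1_Y$ and $g\circ f$ right homotopic to $1_X$. For a groupoid with involution $\alpha$, fixed points are objects $x$ with $\alpha(x)=x$; $G_{\mathbf{f}}$ is the full subgroupoid on fixed points; $G^{\mathbf{G}}$ is the subgroupoid of fixed points and fixed morphisms. *)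

From Stdlib Require Import FunctionalExtensionality ProofIrrelevance.

Set Implicit Arguments.
Unset Strict Implicit.

(* pairs with definitional eta (used for the product groupoid) *)
Set Primitive Projections.
Record gpair (A B : Type) : Type := mkgpair { gfst : A; gsnd : B }.
Unset Primitive Projections.
Arguments mkgpair {A B} _ _.
Arguments gfst {A B} _.
Arguments gsnd {A B} _.

Record Gpd : Type := {
  ob :> Type;
  hom : ob -> ob -> Type;
  gid : forall x, hom x x;
  gcomp : forall x y z, hom y z -> hom x y -> hom x z;
  ginv : forall x y, hom x y -> hom y x;
  gcomp_assoc : forall x y z w (h : hom z w) (g : hom y z) (f : hom x y),
      gcomp h (gcomp g f) = gcomp (gcomp h g) f;
  gcomp_idl : forall x y (f : hom x y), gcomp (gid y) f = f;
  gcomp_idr : forall x y (f : hom x y), gcomp f (gid x) = f;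
  ginv_l : forall x y (f : hom x y), gcomp (ginv f) f = gid x;
  ginv_r : forall x y (f : hom x y), gcomp f (ginv f) = gid y }.
Arguments hom : clear implicits.
Arguments gid {g0} x.
Arguments gcomp {g0 x y z} _ _.
Arguments ginv {g0 x y} _.

Record Functor (C D : Gpd) : Type := {
  fob :> C -> D;
  fhom : forall x y, hom C x y -> hom D (fob x) (fob y);
  fhom_id : forall x, fhom (gid x) = gid (fob x);
  fhom_comp : forall x y z (g : hom C y z) (f : hom C x y),
      fhom (gcomp g f) = gcomp (fhom g) (fhom f) }.
Arguments fob {C D} _ _.
Arguments fhom {C D} _ {x y} _.
Arguments fhom_id {C D} _ x.
Arguments fhom_comp {C D} _ {x y z} _ _.

Lemma Functor_eq (C D : Gpd) (o : C -> D)
  (h1 h2 : forall x y, hom C x y -> hom D (o x) (o y)) p1 q1 p2 q2 :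
  (forall x y (f : hom C x y), h1 x y f = h2 x y f) ->
  @Build_Functor C D o h1 p1 q1 = @Build_Functor C D o h2 p2 q2.
Proof.
  intros H.
  assert (E : h1 = h2).
  { apply functional_extensionality_dep; intro x.
    apply functional_extensionality_dep; intro y.
    apply functional_extensionality; intro f. apply H. }
  subst h2. f_equal; apply proof_irrelevance.
Qed.

Definition Fid (C : Gpd) : Functor C C.
Proof.
  refine (@Build_Functor C C (fun x => x) (fun x y f => f) _ _); reflexivity.
Defined.

Definition Fcomp (C D E : Gpd) (F : Functor D E) (G : Functor C D) : Functor C E.
Proof.
  refine (@Build_Functor C E (fun x => F (G x)) (fun x y f => fhom F (fhom G f)) _ _).
  - intro x; rewrite fhom_id; apply fhom_id.
  - intros; rewrite fhom_comp; apply fhom_comp.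
Defined.

Lemma Fcomp_assoc (A B C D : Gpd) (F : Functor C D) (G : Functor B C) (H : Functor A B) :
  Fcomp F (Fcomp G H) = Fcomp (Fcomp F G) H.
Proof. destruct F, G, H; apply Functor_eq; reflexivity. Qed.

Lemma Fcomp_idl (C D : Gpd) (F : Functor C D) : Fcomp (Fid D) F = F.
Proof. destruct F; apply Functor_eq; reflexivity. Qed.

Lemma Fcomp_idr (C D : Gpd) (F : Functor C D) : Fcomp F (Fid C) = F.
Proof. destruct F; apply Functor_eq; reflexivity. Qed.

Lemma fhom_inv (C D : Gpd) (F : Functor C D) (x y : C) (f : hom C x y) :
  fhom F (ginv f) = ginv (fhom F f).
Proof.
  rewrite <- (gcomp_idl (fhom F (ginv f))).
  rewrite <- (ginv_l (fhom F f)).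
  rewrite <- gcomp_assoc, <- fhom_comp, ginv_r, fhom_id.
  apply gcomp_idr.
Qed.

Definition prod_gpd (C D : Gpd) : Gpd.
Proof.
  refine (@Build_Gpd (gpair C D)
    (fun p q => gpair (hom C (gfst p) (gfst q)) (hom D (gsnd p) (gsnd q)))
    (fun p => mkgpair (gid (gfst p)) (gid (gsnd p)))
    (fun p q r g f => mkgpair (gcomp (gfst g) (gfst f)) (gcomp (gsnd g) (gsnd f)))
    (fun p q f => mkgpair (ginv (gfst f)) (ginv (gsnd f))) _ _ _ _ _); intros; simpl.
  - rewrite !gcomp_assoc; reflexivity.
  - rewrite !gcomp_idl; reflexivity.
  - rewrite !gcomp_idr; reflexivity.
  - rewrite !ginv_l; reflexivity.
  - rewrite !ginv_r; reflexivity.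
Defined.

Definition Fp1 (C D : Gpd) : Functor (prod_gpd C D) C.
Proof.
  refine (@Build_Functor (prod_gpd C D) C (fun p => gfst p) (fun p q f => gfst f) _ _);
    reflexivity.
Defined.

Definition Fp2 (C D : Gpd) : Functor (prod_gpd C D) D.
Proof.
  refine (@Build_Functor (prod_gpd C D) D (fun p => gsnd p) (fun p q f => gsnd f) _ _);
    reflexivity.
Defined.

Definition Fpair (A C D : Gpd) (F : Functor A C) (G : Functor A D) :
  Functor A (prod_gpd C D).
Proof.
  refine (@Build_Functor A (prod_gpd C D) (fun x => mkgpair (F x) (G x))
            (fun x y f => mkgpair (fhom F f) (fhom G f)) _ _); intros; simpl.
  - rewrite !fhom_id; reflexivity.
  - rewrite !fhom_comp; reflexivity.
Defined.

Lemma Fpair_comp (A B C D : Gpd) (F : Functor A C) (G : Functor A D) (K : Functor B A) :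
  Fcomp (Fpair F G) K = Fpair (Fcomp F K) (Fcomp G K).
Proof. destruct F, G, K; apply Functor_eq; reflexivity. Qed.

Lemma Fp1_pair (A C D : Gpd) (F : Functor A C) (G : Functor A D) :
  Fcomp (Fp1 C D) (Fpair F G) = F.
Proof. destruct F, G; apply Functor_eq; reflexivity. Qed.

Lemma Fp2_pair (A C D : Gpd) (F : Functor A C) (G : Functor A D) :
  Fcomp (Fp2 C D) (Fpair F G) = G.
Proof. destruct F, G; apply Functor_eq; reflexivity. Qed.

Lemma Fpair_proj (C D : Gpd) : Fpair (Fp1 C D) (Fp2 C D) = Fid (prod_gpd C D).
Proof. apply Functor_eq; reflexivity. Qed.

Record GpdInv : Type := {
  gpd :> Gpd;
  ginvol : Functor gpd gpd;
  ginvol_invol : Fcomp ginvol ginvol = Fid gpd }.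

Record GMor (X Y : GpdInv) : Type := {
  mfun :> Functor X Y;
  mfun_comm : Fcomp mfun (ginvol X) = Fcomp (ginvol Y) mfun }.
Arguments mfun {X Y} _.
Arguments mfun_comm {X Y} _.

Definition Gid (X : GpdInv) : GMor X X.
Proof.
  refine (@Build_GMor X X (Fid X) _).
  rewrite Fcomp_idl, Fcomp_idr; reflexivity.
Defined.

Definition Gcomp (X Y Z : GpdInv) (g : GMor Y Z) (f : GMor X Y) : GMor X Z.
Proof.
  refine (@Build_GMor X Z (Fcomp g f) _).
  rewrite <- Fcomp_assoc, (mfun_comm f), Fcomp_assoc, (mfun_comm g), <- Fcomp_assoc.
  reflexivity.
Defined.

Definition prod_inv (X Y : GpdInv) : GpdInv.
Proof.
  refine (@Build_GpdInv (prod_gpd X Y)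
    (Fpair (Fcomp (ginvol X) (Fp1 X Y)) (Fcomp (ginvol Y) (Fp2 X Y))) _).
  rewrite Fpair_comp, <- !Fcomp_assoc, Fp1_pair, Fp2_pair, !Fcomp_assoc,
    (ginvol_invol X), (ginvol_invol Y), !Fcomp_idl.
  apply Fpair_proj.
Defined.

Definition Gpair (A X Y : GpdInv) (f : GMor A X) (g : GMor A Y) : GMor A (prod_inv X Y).
Proof.
  refine (@Build_GMor A (prod_inv X Y) (Fpair f g) _).
  simpl. rewrite !Fpair_comp, (mfun_comm f), (mfun_comm g), <- !Fcomp_assoc,
    Fp1_pair, Fp2_pair. reflexivity.
Defined.

Definition Gdiag (X : GpdInv) : GMor X (prod_inv X X) := Gpair (Gid X) (Gid X).

Definition htrans (C : Gpd) (x y x' y' : C) (ex : x = x') (ey : y = y') (f : hom C x y) :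
  hom C x' y' :=
  match ex in _ = a, ey in _ = b return hom C a b with eq_refl, eq_refl => f end.

Definition isofibration (E B : Gpd) (p : Functor E B) : Prop :=
  forall (e : E) (b : B) (phi : hom B (p e) b),
    exists (e' : E) (h : p e' = b) (psi : hom E e e'),
      htrans eq_refl h (fhom p psi) = phi.

(* natural isomorphism (in a groupoid every natural transformation is one) *)
Definition nat_iso (C D : Gpd) (F G : Functor C D) : Prop :=
  exists eta : forall x, hom D (F x) (G x),
    forall x y (phi : hom C x y), gcomp (fhom G phi) (eta x) = gcomp (eta y) (fhom F phi).

Definition gpd_equiv (C D : Gpd) (F : Functor C D) : Prop :=
  exists G : Functor D C, nat_iso (Fcomp G F) (Fid C) /\ nat_iso (Fcomp F G) (Fid D).

Definition gpd_iso (C D : Gpd) (F : Functor C D) : Prop :=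
  exists G : Functor D C, Fcomp G F = Fid C /\ Fcomp F G = Fid D.

Definition weq (X Y : GpdInv) (f : GMor X Y) : Prop := gpd_equiv (mfun f).
Definition fib (X Y : GpdInv) (f : GMor X Y) : Prop := isofibration (mfun f).
Definition tfib (X Y : GpdInv) (f : GMor X Y) : Prop := fib f /\ weq f.
Definition cof (A B : GpdInv) (i : GMor A B) : Prop :=
  forall (E Y : GpdInv) (p : GMor E Y), tfib p ->
  forall (u : GMor A E) (v : GMor B Y), Gcomp p u = Gcomp v i ->
  exists l : GMor B E, Gcomp l i = u /\ Gcomp p l = v.
Definition tcof (A B : GpdInv) (i : GMor A B) : Prop := cof i /\ weq i.

Definition path_object (X P : GpdInv) (s : GMor X P) (p : GMor P (prod_inv X X)) : Prop :=
  tcof s /\ fib p /\ Gcomp p s = Gdiag X.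

Definition right_homotopic (A X : GpdInv) (f g : GMor A X) : Prop :=
  exists (P : GpdInv) (s : GMor X P) (p : GMor P (prod_inv X X)),
    path_object s p /\ exists Hm : GMor A P, Gcomp p Hm = Gpair f g.

Definition right_homotopy_equivalence (X Y : GpdInv) (f : GMor X Y) : Prop :=
  exists g : GMor Y X,
    right_homotopic (Gcomp f g) (Gid Y) /\ right_homotopic (Gcomp g f) (Gid X).

Definition fixpt (X : GpdInv) : Type := { x : X | ginvol X x = x }.

Definition Gfull (X : GpdInv) : Gpd.
Proof.
  refine (@Build_Gpd (fixpt X) (fun x y => hom X (proj1_sig x) (proj1_sig y))
    (fun x => gid (proj1_sig x)) (fun x y z g f => gcomp g f) (fun x y f => ginv f)
    _ _ _ _ _); intros.
  - apply gcomp_assoc.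
  - apply gcomp_idl.
  - apply gcomp_idr.
  - apply ginv_l.
  - apply ginv_r.
Defined.

Lemma htrans_id (C : Gpd) (a b : C) (e : a = b) : htrans e e (gid a) = gid b.
Proof. destruct e; reflexivity. Qed.

Lemma htrans_comp (C : Gpd) (a b c a' b' c' : C) (ea : a = a') (eb : b = b') (ec : c = c')
  (g : hom C b c) (f : hom C a b) :
  htrans ea ec (gcomp g f) = gcomp (htrans eb ec g) (htrans ea eb f).
Proof. destruct ea, eb, ec; reflexivity. Qed.

Lemma htrans_inv (C : Gpd) (a b a' b' : C) (ea : a = a') (eb : b = b') (f : hom C a b) :
  htrans eb ea (ginv f) = ginv (htrans ea eb f).
Proof. destruct ea, eb; reflexivity. Qed.

Lemma htrans_trans (C : Gpd) (a b c a' b' c' : C) (e1 : a = b) (e2 : b = c)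
  (e1' : a' = b') (e2' : b' = c') (f : hom C a a') :
  htrans (eq_trans e1 e2) (eq_trans e1' e2') f = htrans e2 e2' (htrans e1 e1' f).
Proof. destruct e2, e2', e1, e1'; reflexivity. Qed.

Lemma htrans_sym (C : Gpd) (a b a' b' : C) (e : a = b) (e' : a' = b')
  (f : hom C a a') (g : hom C b b') :
  htrans e e' f = g -> htrans (eq_sym e) (eq_sym e') g = f.
Proof. destruct e, e'; simpl; intros ->; reflexivity. Qed.

Lemma htrans_fmap (C D : Gpd) (F : Functor C D) (a b a' b' : C) (e : a = b) (e' : a' = b')
  (f : hom C a a') :
  htrans (f_equal (fob F) e) (f_equal (fob F) e') (fhom F f) = fhom F (htrans e e' f).
Proof. destruct e, e'; reflexivity. Qed.

Lemma functor_eq_hom (C D : Gpd) (F G : Functor C D) (E : F = G) (x y : C) (phi : hom C x y) :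
  htrans (f_equal (fun K : Functor C D => fob K x) E)
         (f_equal (fun K : Functor C D => fob K y) E) (fhom F phi) = fhom G phi.
Proof. destruct E; reflexivity. Qed.

Definition fixed_hom (X : GpdInv) (x y : fixpt X) : Type :=
  { phi : hom X (proj1_sig x) (proj1_sig y) |
    htrans (proj2_sig x) (proj2_sig y) (fhom (ginvol X) phi) = phi }.

Lemma fixed_id (X : GpdInv) (x : fixpt X) :
  htrans (proj2_sig x) (proj2_sig x) (fhom (ginvol X) (gid (proj1_sig x))) = gid (proj1_sig x).
Proof. rewrite fhom_id; apply htrans_id. Qed.

Lemma fixed_comp (X : GpdInv) (x y z : fixpt X) (g : fixed_hom y z) (f : fixed_hom x y) :
  htrans (proj2_sig x) (proj2_sig z) (fhom (ginvol X) (gcomp (proj1_sig g) (proj1_sig f)))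
  = gcomp (proj1_sig g) (proj1_sig f).
Proof.
  rewrite fhom_comp, (htrans_comp _ (proj2_sig y)), (proj2_sig g), (proj2_sig f).
  reflexivity.
Qed.

Lemma fixed_inv (X : GpdInv) (x y : fixpt X) (f : fixed_hom x y) :
  htrans (proj2_sig y) (proj2_sig x) (fhom (ginvol X) (ginv (proj1_sig f)))
  = ginv (proj1_sig f).
Proof. rewrite fhom_inv, htrans_inv, (proj2_sig f); reflexivity. Qed.

Definition Gfixed (X : GpdInv) : Gpd.
Proof.
  refine (@Build_Gpd (fixpt X) (@fixed_hom X)
    (fun x => exist _ (gid (proj1_sig x)) (fixed_id x))
    (fun x y z g f => exist _ (gcomp (proj1_sig g) (proj1_sig f)) (fixed_comp g f))
    (fun x y f => exist _ (ginv (proj1_sig f)) (fixed_inv f))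
    _ _ _ _ _); intros;
    repeat match goal with h : fixed_hom _ _ |- _ => destruct h end;
    apply subset_eq_compat; simpl.
  - apply gcomp_assoc.
  - apply gcomp_idl.
  - apply gcomp_idr.
  - apply ginv_l.
  - apply ginv_r.
Defined.

Definition mcomm_ob (X Y : GpdInv) (f : GMor X Y) (x : X) :
  f (ginvol X x) = ginvol Y (f x) :=
  f_equal (fun K : Functor X Y => fob K x) (mfun_comm f).

Definition fixmap (X Y : GpdInv) (f : GMor X Y) (x : fixpt X) : fixpt Y :=
  exist _ (f (proj1_sig x))
    (eq_trans (eq_sym (mcomm_ob f (proj1_sig x))) (f_equal (fob f) (proj2_sig x))).

Definition Ffull (X Y : GpdInv) (f : GMor X Y) : Functor (Gfull X) (Gfull Y).
Proof.
  refine (@Build_Functor (Gfull X) (Gfull Y) (fixmap f)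
            (fun x y phi => fhom f phi) _ _); intros; simpl.
  - apply fhom_id.
  - apply fhom_comp.
Defined.

Lemma fixed_transfer (X Y : GpdInv) (f : GMor X Y) (x y : X)
  (px : ginvol X x = x) (py : ginvol X y = y) (phi : hom X x y) :
  htrans px py (fhom (ginvol X) phi) = phi ->
  htrans (eq_trans (eq_sym (mcomm_ob f x)) (f_equal (fob f) px))
         (eq_trans (eq_sym (mcomm_ob f y)) (f_equal (fob f) py))
         (fhom (ginvol Y) (fhom f phi)) = fhom f phi.
Proof.
  intro Hphi.
  rewrite htrans_trans.
  pose proof (htrans_sym (functor_eq_hom (mfun_comm f) phi)) as K.
  cbn [Fcomp fhom fob] in K. unfold mcomm_ob.
  rewrite K, htrans_fmap, Hphi. reflexivity.
Qed.

Definition Ffixed (X Y : GpdInv) (f : GMor X Y) : Functor (Gfixed X) (Gfixed Y).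
Proof.
  refine (@Build_Functor (Gfixed X) (Gfixed Y) (fixmap f)
     (fun x y phi => exist _ (fhom f (proj1_sig phi))
        (@fixed_transfer X Y f _ _ (proj2_sig x) (proj2_sig y) _ (proj2_sig phi))) _ _);
    intros; apply subset_eq_compat; simpl.
  - apply fhom_id.
  - apply fhom_comp.
Defined.

Definition bijection (A B : Type) (h : A -> B) : Prop :=
  exists g : B -> A, (forall a, g (h a) = a) /\ (forall b, h (g b) = b).

(* Right homotopic maps are naturally isomorphic: both projections of a path
   object are inverse, up to isomorphism, to the equivalence [X -> PX].  They
   also agree on fixed points: a cofibration hits every fixed point of its
   target by a fixed point (test it against the trivial fibration that freely
   doubles the target), and a homotopy sends a fixed point into the image of
   the diagonal.  So a homotopy equivalence is an equivalence bijective on fixed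
   points.  Conversely, such an [f] has an equivariant weak inverse: a fixed
   point goes to its fixed preimage, and on each free orbit a weak inverse is
   chosen at one point and transported by the involution.  Its counit and unit
   are equivariant natural isomorphisms that are identities on fixed points,
   and such a natural isomorphism [M => id] is a right homotopy into the path
   object whose objects are the arrows of [X].  Finally, an equivalence is
   fully faithful on [G_f] and on [G^G], so these restrictions are isomorphisms
   exactly when [f] is bijective on fixed points. *)

From Stdlib Require Import FunctionalExtensionality ProofIrrelevance ClassicalEpsilon
  PropExtensionality.

Set Implicit Arguments.
Unset Strict Implicit.

Section HeterogeneousHomEquality.

Variable C : Gpd.

Definition heq (x y x' y' : C) (f : hom C x y) (g : hom C x' y') : Prop :=
  exists (ex : x = x') (ey : y = y'), htrans ex ey f = g.

Lemma heq_refl (x y : C) (f : hom C x y) : heq f f.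
Proof. exists eq_refl, eq_refl; reflexivity. Qed.

Lemma heq_sym (x y x' y' : C) (f : hom C x y) (g : hom C x' y') : heq f g -> heq g f.
Proof. intros (ex & ey & E); destruct ex, ey; simpl in E; subst; apply heq_refl. Qed.

Lemma heq_trans (x y x' y' x'' y'' : C) (f : hom C x y) (g : hom C x' y')
  (h : hom C x'' y'') : heq f g -> heq g h -> heq f h.
Proof.
  intros (ex & ey & E) (ex' & ey' & E'); destruct ex, ey, ex', ey'; simpl in *; subst.
  apply heq_refl.
Qed.

Lemma heq_eq (x y : C) (f g : hom C x y) : heq f g -> f = g.
Proof.
  intros (ex & ey & E).
  rewrite (proof_irrelevance _ ex eq_refl), (proof_irrelevance _ ey eq_refl) in E.
  exact E.
Qed.

Lemma heq_src (x y x' y' : C) (f : hom C x y) (g : hom C x' y') : heq f g -> x = x'.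
Proof. intros (ex & _ & _); exact ex. Qed.

Lemma heq_htrans (x y x' y' : C) (ex : x = x') (ey : y = y') (f : hom C x y) :
  heq (htrans ex ey f) f.
Proof. exists (eq_sym ex), (eq_sym ey); destruct ex, ey; reflexivity. Qed.

Lemma heq_id (x x' : C) : x = x' -> heq (gid x) (gid x').
Proof. intros <-; apply heq_refl. Qed.

Lemma heq_comp (x y z x' y' z' : C) (g : hom C y z) (f : hom C x y)
  (g' : hom C y' z') (f' : hom C x' y') :
  heq g g' -> heq f f' -> heq (gcomp g f) (gcomp g' f').
Proof.
  intros (ey & ez & Eg) (ex & ey' & Ef); destruct ex, ey, ez.
  rewrite (proof_irrelevance _ ey' eq_refl) in Ef; simpl in *; subst; apply heq_refl.
Qed.

Lemma heq_inv (x y x' y' : C) (f : hom C x y) (f' : hom C x' y') :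
  heq f f' -> heq (ginv f) (ginv f').
Proof. intros (ex & ey & E); destruct ex, ey; simpl in E; subst; apply heq_refl. Qed.

Lemma heq_family (A : Type) (s t : A -> C) (k : forall a, hom C (s a) (t a)) (a b : A) :
  a = b -> heq (k a) (k b).
Proof. intros <-; apply heq_refl. Qed.

End HeterogeneousHomEquality.

Lemma heq_fhom (C D : Gpd) (F : Functor C D) (x y x' y' : C) (f : hom C x y)
  (f' : hom C x' y') : heq f f' -> heq (fhom F f) (fhom F f').
Proof. intros (ex & ey & E); destruct ex, ey; simpl in E; subst; apply heq_refl. Qed.

Lemma heq_pair (C D : Gpd) (x1 y1 x1' y1' : C) (x2 y2 x2' y2' : D)
  (a : hom C x1 y1) (a' : hom C x1' y1') (b : hom D x2 y2) (b' : hom D x2' y2') :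
  heq a a' -> heq b b' ->
  @heq (prod_gpd C D) (mkgpair x1 x2) (mkgpair y1 y2) (mkgpair x1' x2') (mkgpair y1' y2')
    (mkgpair a b) (mkgpair a' b').
Proof.
  intros (e1 & e2 & Ea) (e3 & e4 & Eb); destruct e1, e2, e3, e4; simpl in *; subst.
  apply heq_refl.
Qed.

Lemma Functor_eq_heq (C D : Gpd) (F G : Functor C D) :
  (forall x, F x = G x) -> (forall x y (f : hom C x y), heq (fhom F f) (fhom G f)) ->
  F = G.
Proof.
  destruct F as [o1 h1 p1 q1], G as [o2 h2 p2 q2]; simpl; intros Eo Eh.
  assert (E : o1 = o2) by (apply functional_extensionality; exact Eo); subst o2.
  apply Functor_eq; intros; apply heq_eq, Eh.
Qed.

Lemma fob_congr (C D : Gpd) (F G : Functor C D) (x : C) : F = G -> F x = G x.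
Proof. intros ->; reflexivity. Qed.

Lemma fhom_congr (C D : Gpd) (F G : Functor C D) (x y : C) (f : hom C x y) :
  F = G -> heq (fhom F f) (fhom G f).
Proof. intros ->; apply heq_refl. Qed.

Lemma GMor_eq (X Y : GpdInv) (f g : GMor X Y) : mfun f = mfun g -> f = g.
Proof.
  destruct f as [f pf], g as [g pg]; simpl; intros <-.
  f_equal; apply proof_irrelevance.
Qed.

Lemma ginvolK (X : GpdInv) (x : X) : ginvol X (ginvol X x) = x.
Proof. exact (fob_congr x (ginvol_invol X)). Qed.

Lemma fhom_ginvolK (X : GpdInv) (x y : X) (f : hom X x y) :
  heq (fhom (ginvol X) (fhom (ginvol X) f)) f.
Proof. exact (fhom_congr f (ginvol_invol X)). Qed.

Lemma fhom_mcomm (X Y : GpdInv) (m : GMor X Y) (x y : X) (f : hom X x y) :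
  heq (fhom m (fhom (ginvol X) f)) (fhom (ginvol Y) (fhom m f)).
Proof. exact (fhom_congr f (mfun_comm m)). Qed.

Lemma fixpt_eq (X : GpdInv) (a b : fixpt X) : proj1_sig a = proj1_sig b -> a = b.
Proof.
  destruct a as [a pa], b as [b pb]; simpl; intros <-.
  f_equal; apply proof_irrelevance.
Qed.

Lemma gcomp_cancelr (C : Gpd) (x y z : C) (u v : hom C y z) (h : hom C x y) :
  gcomp u h = gcomp v h -> u = v.
Proof.
  intros E; apply (f_equal (fun k => gcomp k (ginv h))) in E.
  rewrite <- !gcomp_assoc, ginv_r, !gcomp_idr in E; exact E.
Qed.

Lemma gcomp_cancell (C : Gpd) (x y z : C) (u v : hom C x y) (h : hom C y z) :
  gcomp h u = gcomp h v -> u = v.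
Proof.
  intros E; apply (f_equal (gcomp (ginv h))) in E.
  rewrite !gcomp_assoc, ginv_l, !gcomp_idl in E; exact E.
Qed.

Lemma ginv_id (C : Gpd) (x : C) : ginv (gid x) = gid x.
Proof. rewrite <- (gcomp_idr (ginv (gid x))); apply ginv_l. Qed.

Definition faithful (C D : Gpd) (F : Functor C D) : Prop :=
  forall x y (u v : hom C x y), fhom F u = fhom F v -> u = v.

Lemma faithful_heq (C D : Gpd) (F : Functor C D) (x y x' y' : C)
  (u : hom C x y) (v : hom C x' y') :
  faithful F -> x = x' -> y = y' -> heq (fhom F u) (fhom F v) -> heq u v.
Proof.
  intros HF <- <- E; apply heq_eq, HF in E; subst; apply heq_refl.
Qed.

Lemma faithful_Fcomp_inj (C D E : Gpd) (q : Functor D E) (L1 L2 : Functor C D) :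
  faithful q -> (forall x, L1 x = L2 x) -> Fcomp q L1 = Fcomp q L2 -> L1 = L2.
Proof.
  intros Hq Eo Eq; apply Functor_eq_heq; [exact Eo|]; intros x y f.
  exact (faithful_heq Hq (Eo x) (Eo y) (fhom_congr f Eq)).
Qed.

Section NaturalIsos.

Variables C D : Gpd.

Lemma nat_iso_sym (F G : Functor C D) : nat_iso F G -> nat_iso G F.
Proof.
  intros [eta Heta]; exists (fun x => ginv (eta x)); intros x y f.
  apply (gcomp_cancell (h := eta y)), (gcomp_cancelr (h := eta x)).
  rewrite <- !gcomp_assoc, ginv_l, gcomp_idr, !gcomp_assoc, ginv_r, gcomp_idl.
  symmetry; apply Heta.
Qed.

Lemma nat_iso_trans (F G K : Functor C D) : nat_iso F G -> nat_iso G K -> nat_iso F K.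
Proof.
  intros [a Ha] [b Hb]; exists (fun x => gcomp (b x) (a x)); intros x y f.
  rewrite gcomp_assoc, Hb, <- gcomp_assoc, Ha, gcomp_assoc; reflexivity.
Qed.

Lemma nat_iso_whiskerl (B : Gpd) (K : Functor D B) (F G : Functor C D) :
  nat_iso F G -> nat_iso (Fcomp K F) (Fcomp K G).
Proof.
  intros [a Ha]; exists (fun x => fhom K (a x)); intros x y f; simpl.
  rewrite <- !fhom_comp, Ha; reflexivity.
Qed.

Lemma nat_iso_whiskerr (B : Gpd) (K : Functor B C) (F G : Functor C D) :
  nat_iso F G -> nat_iso (Fcomp F K) (Fcomp G K).
Proof. intros [a Ha]; exists (fun x => a (K x)); intros x y f; apply Ha. Qed.

End NaturalIsos.

Lemma nat_iso_retraction (X P : Gpd) (s : Functor X P) (r Q : Functor P X) :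
  nat_iso (Fcomp s r) (Fid P) -> Fcomp Q s = Fid X -> nat_iso Q r.
Proof.
  intros Hsr HQs; pose proof (nat_iso_whiskerl Q (nat_iso_sym Hsr)) as E.
  rewrite Fcomp_idr, Fcomp_assoc, HQs, Fcomp_idl in E; exact E.
Qed.

Lemma gpd_equiv_faithful (C D : Gpd) (F : Functor C D) : gpd_equiv F -> faithful F.
Proof.
  intros (G & [eta Heta] & _) x y u v Euv.
  pose proof (Heta x y u) as Eu; pose proof (Heta x y v) as Ev; simpl in Eu, Ev.
  rewrite Euv, <- Ev in Eu; exact (gcomp_cancelr Eu).
Qed.

Lemma gpd_equiv_full (C D : Gpd) (F : Functor C D) (HF : gpd_equiv F) (x y : C)
  (chi : hom D (F x) (F y)) : exists u : hom C x y, fhom F u = chi.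
Proof.
  pose proof HF as (G & [eta Heta] & HFG).
  assert (HG : faithful G).
  { apply gpd_equiv_faithful; exists F; split; [exact HFG | exists eta; exact Heta]. }
  set (u := gcomp (eta y) (gcomp (fhom G chi) (ginv (eta x)))).
  exists u; apply HG.
  apply (gcomp_cancell (h := eta y)); transitivity (gcomp u (eta x)).
  - symmetry; exact (Heta x y u).
  - unfold u; rewrite <- !gcomp_assoc, ginv_l, gcomp_idr; reflexivity.
Qed.

Definition equiv_preimage (C D : Gpd) (F : Functor C D) (HF : gpd_equiv F) (x y : C)
  (chi : hom D (F x) (F y)) : hom C x y :=
  proj1_sig (constructive_indefinite_description _ (gpd_equiv_full HF chi)).

Lemma fhom_equiv_preimage (C D : Gpd) (F : Functor C D) (HF : gpd_equiv F) (x y : C)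
  (chi : hom D (F x) (F y)) : fhom F (equiv_preimage HF chi) = chi.
Proof. exact (proj2_sig (constructive_indefinite_description _ (gpd_equiv_full HF chi))). Qed.

Lemma gpd_equiv_counit (C D : Gpd) (F : Functor C D) :
  gpd_equiv F -> { G : Functor D C & forall y, hom D (F (G y)) y }.
Proof.
  intros HF; apply constructive_indefinite_description in HF as [G [_ HFG]].
  apply constructive_indefinite_description in HFG as [eps _].
  exists G; exact eps.
Qed.

Lemma tfib_surjective (E Z : Gpd) (q : Functor E Z) :
  isofibration q -> gpd_equiv q -> forall z, exists e, q e = z.
Proof.
  intros Hfib Heq z; destruct (gpd_equiv_counit Heq) as [G eps].
  destruct (Hfib (G z) z (eps z)) as (e & Ee & _); exists e; exact Ee.
Qed.

Definition induced_gpd (C : Gpd) (O : Type) (tau : O -> C) : Gpd.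
Proof.
  refine (@Build_Gpd O (fun a b => hom C (tau a) (tau b))
    (fun a => gid (tau a)) (fun a b c g f => gcomp g f) (fun a b f => ginv f)
    _ _ _ _ _); intros.
  - apply gcomp_assoc.
  - apply gcomp_idl.
  - apply gcomp_idr.
  - apply ginv_l.
  - apply ginv_r.
Defined.

Definition induced_incl (C : Gpd) (O : Type) (tau : O -> C) :
  Functor (induced_gpd tau) C.
Proof.
  refine (@Build_Functor (induced_gpd tau) C tau (fun a b f => f) _ _); reflexivity.
Defined.

Lemma induced_incl_faithful (C : Gpd) (O : Type) (tau : O -> C) :
  faithful (induced_incl tau).
Proof. intros x y u v E; exact E. Qed.

Lemma heq_induced (C : Gpd) (O : Type) (tau : O -> C) (a b a' b' : O)
  (f : hom (induced_gpd tau) a b) (g : hom (induced_gpd tau) a' b') :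
  a = a' -> b = b' -> @heq C _ _ _ _ f g -> @heq (induced_gpd tau) _ _ _ _ f g.
Proof. intros <- <- E; apply heq_eq in E; subst; apply heq_refl. Qed.

Section InducedInvolution.

Variables (C : GpdInv) (O : Type) (iota : O -> O) (tau : O -> C).
Hypothesis iotaK : forall o, iota (iota o) = o.
Hypothesis tau_comm : forall o, tau (iota o) = ginvol C (tau o).

Definition induced_invol : Functor (induced_gpd tau) (induced_gpd tau).
Proof.
  refine (@Build_Functor (induced_gpd tau) (induced_gpd tau) iota
    (fun a b f => htrans (eq_sym (tau_comm a)) (eq_sym (tau_comm b)) (fhom (ginvol C) f))
    _ _).
  - intros x; simpl; rewrite fhom_id; apply htrans_id.
  - intros x y z g f; simpl; rewrite fhom_comp; apply htrans_comp.
Defined.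

Lemma induced_incl_comm :
  Fcomp (induced_incl tau) induced_invol = Fcomp (ginvol C) (induced_incl tau).
Proof. apply Functor_eq_heq; [exact tau_comm | intros; apply heq_htrans]. Qed.

Lemma induced_involK : Fcomp induced_invol induced_invol = Fid (induced_gpd tau).
Proof.
  apply (faithful_Fcomp_inj (induced_incl_faithful (tau := tau))); [exact iotaK|].
  rewrite Fcomp_assoc, induced_incl_comm, <- Fcomp_assoc, induced_incl_comm,
    Fcomp_assoc, (ginvol_invol C), Fcomp_idl, Fcomp_idr; reflexivity.
Qed.

Definition induced_inv : GpdInv :=
  @Build_GpdInv (induced_gpd tau) induced_invol induced_involK.

Definition induced_inclG : GMor induced_inv C :=
  @Build_GMor induced_inv C (induced_incl tau) induced_incl_comm.

End InducedInvolution.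

Section FullyFaithfulLift.

Variables (D E Z : Gpd) (q : Functor E Z).
Variable pre : forall a b, hom Z (q a) (q b) -> hom E a b.
Hypothesis fhom_pre : forall a b (chi : hom Z (q a) (q b)), fhom q (pre chi) = chi.
Hypothesis q_faithful : faithful q.

Definition lift_functor (k : D -> E) (h : forall x y, hom D x y -> hom Z (q (k x)) (q (k y)))
  (h_id : forall x, h x x (gid x) = gid _)
  (h_comp : forall x y z (g : hom D y z) (f : hom D x y),
      h x z (gcomp g f) = gcomp (h _ _ g) (h _ _ f)) : Functor D E.
Proof.
  refine (@Build_Functor D E k (fun x y f => pre (h x y f)) _ _).
  - intros x; apply q_faithful; rewrite fhom_pre, h_id, fhom_id; reflexivity.
  - intros x y z g f; apply q_faithful; rewrite fhom_comp, !fhom_pre, h_comp; reflexivity.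
Defined.

Variables (k : D -> E) (V : Functor D Z).
Hypothesis qk : forall x, q (k x) = V x.

Definition transport_hom (x y : D) (f : hom D x y) : hom Z (q (k x)) (q (k y)) :=
  htrans (eq_sym (qk x)) (eq_sym (qk y)) (fhom V f).

Lemma transport_hom_id (x : D) : transport_hom (gid x) = gid _.
Proof. unfold transport_hom; rewrite fhom_id; apply htrans_id. Qed.

Lemma transport_hom_comp (x y z : D) (g : hom D y z) (f : hom D x y) :
  transport_hom (gcomp g f) = gcomp (transport_hom g) (transport_hom f).
Proof. unfold transport_hom; rewrite fhom_comp; apply htrans_comp. Qed.

Definition lift_over : Functor D E :=
  lift_functor transport_hom_id transport_hom_comp.

Lemma Fcomp_lift_over : Fcomp q lift_over = V.
Proof.
  apply Functor_eq_heq; [exact qk|]; intros x y f; simpl.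
  rewrite fhom_pre; apply heq_htrans.
Qed.

End FullyFaithfulLift.

Section CofibrationsHitFixedPoints.

Variables (A P : GpdInv) (s : GMor A P).

Definition tagged_iota (o : A + P * bool) : A + P * bool :=
  match o with inl x => inl (ginvol A x) | inr (z, t) => inr (ginvol P z, negb t) end.

Definition tagged_base (o : A + P * bool) : P :=
  match o with inl x => s x | inr (z, _) => z end.

Lemma tagged_iotaK (o : A + P * bool) : tagged_iota (tagged_iota o) = o.
Proof.
  destruct o as [x | [z t]]; simpl; f_equal; rewrite ?ginvolK, ?Bool.negb_involutive;
    reflexivity.
Qed.

Lemma tagged_base_comm (o : A + P * bool) :
  tagged_base (tagged_iota o) = ginvol P (tagged_base o).
Proof. destruct o as [x | [z t]]; [apply mcomm_ob | reflexivity]. Qed.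

(* The tag makes the involution free away from [A], so the fixed points of
   [tagged] all come from fixed points of [A]. *)
Definition tagged : GpdInv := induced_inv tagged_iotaK tagged_base_comm.

Definition tagged_proj : GMor tagged P := induced_inclG tagged_iotaK tagged_base_comm.

Lemma tagged_proj_tfib : tfib tagged_proj.
Proof.
  split.
  - intros e z phi; exists (inr (z, false)), eq_refl, phi; reflexivity.
  - unshelve eexists.
    + refine (@Build_Functor P tagged (fun z => inr (z, false)) (fun a b f => f) _ _);
        reflexivity.
    + split; [exists (fun e => gid (tagged_base e)) | exists (fun z => gid z)];
        intros x y f; simpl; rewrite gcomp_idl, gcomp_idr; reflexivity.
Qed.

Definition tagged_inl : GMor A tagged.
Proof.
  unshelve refine (@Build_GMor A tagged _ _).
  - refine (@Build_Functor A tagged inl (fun x y f => fhom s f) _ _).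
    + intros; apply fhom_id.
    + intros; apply fhom_comp.
  - apply Functor_eq_heq; [reflexivity|]; intros x y f.
    apply heq_induced; try reflexivity; simpl.
    apply (heq_trans (fhom_mcomm s f)), heq_sym, heq_htrans.
Defined.

Lemma cof_fixpt_surj : cof s ->
  forall z, ginvol P z = z -> exists x, ginvol A x = x /\ s x = z.
Proof.
  intros Hs z Hz.
  destruct (Hs _ _ _ tagged_proj_tfib tagged_inl (Gid P)) as (l & _ & Hl).
  { apply GMor_eq, Functor_eq_heq; [reflexivity | intros; apply heq_refl]. }
  pose proof (mcomm_ob l z) as Efix; rewrite Hz in Efix.
  pose proof (fob_congr z (f_equal (@mfun _ _) Hl)) as Ebase.
  change (tagged_base (l z) = z) in Ebase; change (l z = tagged_iota (l z)) in Efix.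
  destruct (l z) as [x | [w [|]]]; simpl in Efix, Ebase; injection Efix;
    [intros Ex | discriminate | discriminate].
  exists x; split; [symmetry; exact Ex | exact Ebase].
Qed.

End CofibrationsHitFixedPoints.

Section RightHomotopyInvariants.

Variables (A X : GpdInv) (f g : GMor A X).
Hypothesis Hfg : right_homotopic f g.

Lemma right_homotopic_nat_iso : nat_iso (mfun f) (mfun g).
Proof.
  destruct Hfg as (P & s & p & ([_ (r & _ & Hsr)] & _ & Hps) & Hm & Hp).
  apply (f_equal (@mfun _ _)) in Hps, Hp.
  assert (Hproj : forall (pr : Functor (prod_inv X X) X) (F0 : Functor A X),
             Fcomp pr (Fpair (Fid X) (Fid X)) = Fid X ->
             Fcomp pr (Fpair (mfun f) (mfun g)) = F0 ->
             Fcomp (Fcomp pr (mfun p)) (mfun Hm) = F0 /\ nat_iso (Fcomp pr (mfun p)) r).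
  { intros pr F0 Epr EF0; split.
    - rewrite <- Fcomp_assoc, <- EF0; apply f_equal, Hp.
    - apply (nat_iso_retraction Hsr); rewrite <- Fcomp_assoc.
      etransitivity; [apply f_equal, Hps | exact Epr]. }
  destruct (Hproj (Fp1 X X) (mfun f) (Fp1_pair _ _) (Fp1_pair _ _)) as [<- H1].
  destruct (Hproj (Fp2 X X) (mfun g) (Fp2_pair _ _) (Fp2_pair _ _)) as [<- H2].
  exact (nat_iso_whiskerr (mfun Hm) (nat_iso_trans H1 (nat_iso_sym H2))).
Qed.

(* A homotopy sends a fixed point to a fixed point of the path object, which
   comes from the cofibration [X -> PX], hence lies over the diagonal. *)
Lemma right_homotopic_fixpt (x : A) : ginvol A x = x -> f x = g x.
Proof.
  intros Hx.
  destruct Hfg as (P & s & p & ([Hs _] & _ & Hps) & Hm & Hp).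
  pose proof (mcomm_ob Hm x) as Efix; rewrite Hx in Efix.
  destruct (cof_fixpt_surj Hs (eq_sym Efix)) as (x0 & _ & Ex0).
  pose proof (fob_congr x (f_equal (@mfun _ _) Hp)) as E1.
  pose proof (fob_congr x0 (f_equal (@mfun _ _) Hps)) as E2.
  simpl in E1, E2; rewrite <- Ex0, E2 in E1.
  pose proof (f_equal gfst E1) as Ef; pose proof (f_equal gsnd E1) as Eg; simpl in Ef, Eg.
  congruence.
Qed.

End RightHomotopyInvariants.

Lemma rhe_weq (X Y : GpdInv) (f : GMor X Y) : right_homotopy_equivalence f -> weq f.
Proof.
  intros (g & Hfg & Hgf); exists (mfun g).
  split; [exact (right_homotopic_nat_iso Hgf) | exact (right_homotopic_nat_iso Hfg)].
Qed.

Lemma rhe_fixmap_bijective (X Y : GpdInv) (f : GMor X Y) :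
  right_homotopy_equivalence f -> bijection (fixmap f).
Proof.
  intros (g & Hfg & Hgf); exists (fixmap g); split.
  - intros [x px]; apply fixpt_eq; exact (right_homotopic_fixpt Hgf px).
  - intros [y py]; apply fixpt_eq; exact (right_homotopic_fixpt Hfg py).
Qed.

Lemma gpd_iso_bijective (C D : Gpd) (q : Functor C D) : gpd_iso q -> bijection (fob q).
Proof.
  intros (G & HGq & HqG); exists (fob G); split.
  - intro a; exact (fob_congr a HGq).
  - intro b; exact (fob_congr b HqG).
Qed.

Lemma gpd_iso_of_bijective (C D : Gpd) (q : Functor C D)
  (pre : forall a b, hom D (q a) (q b) -> hom C a b) :
  (forall a b (chi : hom D (q a) (q b)), fhom q (pre a b chi) = chi) -> faithful q ->
  bijection (fob q) -> gpd_iso q.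
Proof.
  intros Hpre Hq (inv & inv_q & q_inv).
  exists (lift_over Hpre Hq (V := Fid D) q_inv); split.
  - apply (faithful_Fcomp_inj Hq); [exact inv_q|].
    rewrite Fcomp_assoc, Fcomp_lift_over, Fcomp_idl, Fcomp_idr; reflexivity.
  - apply Fcomp_lift_over.
Qed.

Lemma Ffull_iso_iff (X Y : GpdInv) (f : GMor X Y) :
  weq f -> (gpd_iso (Ffull f) <-> bijection (fixmap f)).
Proof.
  intros Hf; split; [apply gpd_iso_bijective|].
  apply (gpd_iso_of_bijective (q := Ffull f)
           (pre := fun a b chi =>
                     equiv_preimage Hf (x := proj1_sig a) (y := proj1_sig b) chi)).
  - intros a b; exact (fhom_equiv_preimage Hf (x := proj1_sig a) (y := proj1_sig b)).
  - intros a b u v; apply (gpd_equiv_faithful Hf).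
Qed.

Lemma equiv_preimage_fixed (X Y : GpdInv) (f : GMor X Y) (Hf : weq f) (a b : fixpt X)
  (chi : fixed_hom (fixmap f a) (fixmap f b)) :
  htrans (proj2_sig a) (proj2_sig b) (fhom (ginvol X) (equiv_preimage Hf (proj1_sig chi)))
  = equiv_preimage Hf (proj1_sig chi).
Proof.
  apply (gpd_equiv_faithful Hf); rewrite fhom_equiv_preimage; apply heq_eq.
  apply (heq_trans (heq_fhom _ (heq_htrans _ _ _))).
  apply (heq_trans (fhom_mcomm _ _)); rewrite fhom_equiv_preimage.
  destruct chi as [c pc]; simpl.
  apply (heq_trans (heq_sym (heq_htrans (proj2_sig (fixmap f a)) (proj2_sig (fixmap f b)) _))).
  exists eq_refl, eq_refl; exact pc.
Qed.

Lemma Ffixed_iso_iff (X Y : GpdInv) (f : GMor X Y) :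
  weq f -> (gpd_iso (Ffixed f) <-> bijection (fixmap f)).
Proof.
  intros Hf; split; [apply gpd_iso_bijective|].
  apply (gpd_iso_of_bijective (q := Ffixed f)
           (pre := fun a b chi => exist _ _ (equiv_preimage_fixed Hf chi))).
  - intros a b [c pc]; apply subset_eq_compat; apply fhom_equiv_preimage.
  - intros a b [u pu] [v pv] E; apply subset_eq_compat.
    apply (f_equal (@proj1_sig _ _)) in E; exact (gpd_equiv_faithful Hf E).
Qed.

Record Arrow (X : Gpd) : Type := mkArrow { asrc : X; atgt : X; arr : hom X asrc atgt }.
Arguments mkArrow {X} asrc atgt arr.
Arguments asrc {X} _.
Arguments atgt {X} _.
Arguments arr {X} _.

Lemma mkArrow_heq (X : Gpd) (x y x' y' : X) (a : hom X x y) (a' : hom X x' y') :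
  heq a a' -> mkArrow x y a = mkArrow x' y' a'.
Proof. intros (ex & ey & E); destruct ex, ey; simpl in E; subst; reflexivity. Qed.

Section PathObject.

Variable X : GpdInv.

Definition arrow_invol (r : Arrow X) : Arrow X :=
  mkArrow (ginvol X (asrc r)) (ginvol X (atgt r)) (fhom (ginvol X) (arr r)).

Lemma arrow_involK (r : Arrow X) : arrow_invol (arrow_invol r) = r.
Proof. destruct r as [x y a]; apply mkArrow_heq, fhom_ginvolK. Qed.

(* Objects of the path object: identities [inl x], and arrows tagged by a
   boolean that the involution flips, so that its fixed points are those of [X]. *)
Definition path_ob : Type := (X + Arrow X * bool)%type.

Definition path_iota (o : path_ob) : path_ob :=
  match o with
  | inl x => inl (ginvol X x)
  | inr (r, t) => inr (arrow_invol r, negb t)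
  end.

Definition path_src (o : path_ob) : X :=
  match o with inl x => x | inr (r, _) => asrc r end.

Definition path_tgt (o : path_ob) : X :=
  match o with inl x => x | inr (r, _) => atgt r end.

Definition path_arr (o : path_ob) : hom X (path_src o) (path_tgt o) :=
  match o return hom X (path_src o) (path_tgt o) with
  | inl x => gid x
  | inr (r, _) => arr r
  end.

Lemma path_iotaK (o : path_ob) : path_iota (path_iota o) = o.
Proof.
  destruct o as [x | [r t]]; simpl; f_equal;
    rewrite ?ginvolK, ?arrow_involK, ?Bool.negb_involutive; reflexivity.
Qed.

Lemma path_src_comm (o : path_ob) : path_src (path_iota o) = ginvol X (path_src o).
Proof. destruct o as [x | [r t]]; reflexivity. Qed.

Lemma path_arr_comm (o : path_ob) :
  heq (path_arr (path_iota o)) (fhom (ginvol X) (path_arr o)).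
Proof. destruct o as [x | [r t]]; simpl; rewrite ?fhom_id; apply heq_refl. Qed.

Definition path_gpd : GpdInv := induced_inv path_iotaK path_src_comm.

Definition path_incl : Functor path_gpd X := induced_incl path_src.

Lemma path_incl_faithful : faithful path_incl.
Proof. apply induced_incl_faithful. Qed.

Lemma path_incl_comm : Fcomp path_incl (ginvol path_gpd) = Fcomp (ginvol X) path_incl.
Proof. exact (induced_incl_comm path_src_comm). Qed.

Definition path_const : GMor X path_gpd.
Proof.
  unshelve refine (@Build_GMor X path_gpd _ _).
  - refine (@Build_Functor X path_gpd inl (fun x y f => f) _ _); reflexivity.
  - apply Functor_eq_heq; [reflexivity|]; intros x y f.
    apply heq_induced; try reflexivity; apply heq_sym, heq_htrans.
Defined.

Definition path_conj (o o' : path_ob) (b : hom X (path_src o) (path_src o')) :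
  hom X (path_tgt o) (path_tgt o') :=
  gcomp (path_arr o') (gcomp b (ginv (path_arr o))).

Lemma path_conj_id (o : path_ob) : path_conj (gid _) = gid (path_tgt o).
Proof. unfold path_conj; rewrite gcomp_idl, ginv_r; reflexivity. Qed.

Lemma path_conj_comp (o o' o'' : path_ob) (g : hom X (path_src o') (path_src o''))
  (f : hom X (path_src o) (path_src o')) :
  path_conj (gcomp g f) = gcomp (path_conj g) (path_conj f).
Proof.
  unfold path_conj; rewrite !gcomp_assoc; do 2 f_equal.
  rewrite <- (gcomp_assoc _ (ginv (path_arr o'))), ginv_l, gcomp_idr; reflexivity.
Qed.

Definition path_ends_functor : Functor path_gpd (prod_inv X X).
Proof.
  refine (@Build_Functor path_gpd (prod_inv X X)
    (fun o => mkgpair (path_src o) (path_tgt o))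
    (fun o o' f => mkgpair f (path_conj f)) _ _); intros; simpl.
  - rewrite path_conj_id; reflexivity.
  - rewrite path_conj_comp; reflexivity.
Defined.

Lemma path_ends_comm :
  Fcomp path_ends_functor (ginvol path_gpd) = Fcomp (ginvol (prod_inv X X)) path_ends_functor.
Proof.
  apply Functor_eq_heq; [intros [x | [r t]]; reflexivity|]; intros o o' f.
  simpl; apply heq_pair; [apply heq_htrans|].
  unfold path_conj; rewrite !fhom_comp, fhom_inv.
  apply heq_comp; [apply path_arr_comm|].
  apply heq_comp; [apply heq_htrans | apply heq_inv, path_arr_comm].
Qed.

Definition path_ends : GMor path_gpd (prod_inv X X) := Build_GMor path_ends_comm.

Lemma path_ends_fib : fib path_ends.
Proof.
  intros o b phi.
  exists (inr (mkArrow (gfst b) (gsnd b)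
                 (gcomp (gsnd phi) (gcomp (path_arr o) (ginv (gfst phi)))), false)).
  exists eq_refl, (gfst phi); simpl.
  change phi with (mkgpair (gfst phi) (gsnd phi)); unfold path_conj; simpl; f_equal.
  rewrite !gcomp_assoc, <- (gcomp_assoc _ (ginv (gfst phi))), ginv_l, gcomp_idr.
  rewrite <- gcomp_assoc, ginv_r, gcomp_idr; reflexivity.
Qed.

Lemma path_const_weq : weq path_const.
Proof.
  exists path_incl; split;
    [exists (fun x => gid x) | exists (fun o => gid (path_src o))];
    intros x y f; simpl; rewrite gcomp_idl, gcomp_idr; reflexivity.
Qed.

Lemma path_ends_const : Gcomp path_ends path_const = Gdiag X.
Proof.
  apply GMor_eq, Functor_eq_heq; [reflexivity|]; intros x y f; simpl.
  unfold path_conj; simpl; rewrite ginv_id, gcomp_idr, gcomp_idl; apply heq_refl.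
Qed.

End PathObject.

Definition tfib_section (E Z : GpdInv) (q : GMor E Z) (Hq : tfib q) (z : Z) : E :=
  proj1_sig (constructive_indefinite_description _
    (tfib_surjective (proj1 Hq) (proj2 Hq) z)).

Lemma tfib_sectionK (E Z : GpdInv) (q : GMor E Z) (Hq : tfib q) (z : Z) :
  q (tfib_section Hq z) = z.
Proof.
  exact (proj2_sig (constructive_indefinite_description _
    (tfib_surjective (proj1 Hq) (proj2 Hq) z))).
Qed.

Section PathConstCofibration.

Variables (X E Z : GpdInv) (q : GMor E Z) (u : GMor X E) (v : GMor (path_gpd X) Z).
Hypothesis Hq : tfib q.
Hypothesis Huv : Gcomp q u = Gcomp v (path_const X).

(* On the free orbits the lift is chosen at the [false]-tagged object and
   transported to the [true]-tagged one by the involution. *)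
Definition path_lift_ob (o : path_ob X) : E :=
  match o with
  | inl x => u x
  | inr (r, false) => tfib_section Hq (v (inr (r, false)))
  | inr (r, true) => ginvol E (tfib_section Hq (v (inr (arrow_invol r, false))))
  end.

Lemma path_lift_obK (o : path_ob X) : q (path_lift_ob o) = v o.
Proof.
  destruct o as [x | [r [|]]]; simpl.
  - exact (fob_congr x (f_equal (@mfun _ _) Huv)).
  - rewrite mcomm_ob, tfib_sectionK, <- (mcomm_ob v); simpl.
    rewrite arrow_involK; reflexivity.
  - apply tfib_sectionK.
Qed.

Lemma path_lift_ob_comm (o : path_ob X) :
  path_lift_ob (path_iota o) = ginvol E (path_lift_ob o).
Proof.
  destruct o as [x | [r [|]]]; simpl.
  - apply mcomm_ob.
  - rewrite ginvolK; reflexivity.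
  - rewrite arrow_involK; reflexivity.
Qed.

Definition path_lift_functor : Functor (path_gpd X) E :=
  lift_over (fhom_equiv_preimage (proj2 Hq)) (gpd_equiv_faithful (proj2 Hq))
    (V := mfun v) path_lift_obK.

Lemma path_lift_functor_comm :
  Fcomp path_lift_functor (ginvol (path_gpd X)) = Fcomp (ginvol E) path_lift_functor.
Proof.
  apply (faithful_Fcomp_inj (gpd_equiv_faithful (proj2 Hq))); [exact path_lift_ob_comm|].
  rewrite !Fcomp_assoc; unfold path_lift_functor.
  rewrite Fcomp_lift_over, (mfun_comm q), <- Fcomp_assoc, Fcomp_lift_over.
  apply (mfun_comm v).
Qed.

Lemma path_const_lift :
  exists l : GMor (path_gpd X) E, Gcomp l (path_const X) = u /\ Gcomp q l = v.
Proof.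
  exists (Build_GMor path_lift_functor_comm); split; apply GMor_eq; simpl.
  - apply (faithful_Fcomp_inj (gpd_equiv_faithful (proj2 Hq))); [reflexivity|].
    rewrite Fcomp_assoc; unfold path_lift_functor; rewrite Fcomp_lift_over.
    exact (eq_sym (f_equal (@mfun _ _) Huv)).
  - apply Fcomp_lift_over.
Qed.

End PathConstCofibration.

Lemma path_object_path_gpd (X : GpdInv) : path_object (path_const X) (path_ends X).
Proof.
  split; [split|split].
  - intros E Z q Hq u v Huv; exact (path_const_lift Hq Huv).
  - apply path_const_weq.
  - apply path_ends_fib.
  - apply path_ends_const.
Qed.

Lemma involution_orientation (T : Type) (s : T -> T) : (forall t, s (s t) = t) ->
  { side : T -> bool | forall t, s t <> t -> side (s t) = negb (side t) }.
Proof.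
  intros sK.
  set (rep t := epsilon (inhabits t) (fun z => z = t \/ z = s t)).
  assert (rep_spec : forall t, rep t = t \/ rep t = s t).
  { intros t; apply epsilon_spec; exists t; left; reflexivity. }
  assert (rep_s : forall t, rep (s t) = rep t).
  { intros t; unfold rep.
    replace (fun z => z = s t \/ z = s (s t)) with (fun z => z = t \/ z = s t)
      by (apply functional_extensionality; intros z;
          apply propositional_extensionality; rewrite sK; tauto).
    f_equal; apply proof_irrelevance. }
  exists (fun t => if excluded_middle_informative (rep t = t) then true else false).
  intros t Hst; rewrite rep_s.
  destruct (excluded_middle_informative (rep t = t)) as [Et | Nt],
    (excluded_middle_informative (rep t = s t)) as [Est | Nst]; try reflexivity.
  - congruence.
  - destruct (rep_spec t); contradiction.
Qed.

Definition side (X : GpdInv) : X -> bool :=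
  proj1_sig (involution_orientation (@ginvolK X)).

Lemma side_ginvol (X : GpdInv) (x : X) :
  ginvol X x <> x -> side (ginvol X x) = negb (side x).
Proof. exact (proj2_sig (involution_orientation (@ginvolK X)) x). Qed.

Section HomotopyFromNaturalIso.

Variables (Y : GpdInv) (M : GMor Y Y) (eps : forall y, hom Y (M y) y).
Hypothesis eps_nat :
  forall y y' (phi : hom Y y y'), gcomp (eps y') (fhom M phi) = gcomp phi (eps y).
Hypothesis eps_comm : forall y, heq (eps (ginvol Y y)) (fhom (ginvol Y) (eps y)).
Hypothesis eps_fixpt : forall y, ginvol Y y = y -> heq (eps y) (gid y).

Definition homotopy_ob (y : Y) : path_ob Y :=
  if excluded_middle_informative (ginvol Y y = y) then inl y
  else inr (mkArrow (M y) y (eps y), side y).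

Lemma homotopy_ob_src (y : Y) : path_src (homotopy_ob y) = M y.
Proof.
  unfold homotopy_ob; destruct excluded_middle_informative as [Hy | _]; [|reflexivity].
  exact (eq_sym (heq_src (eps_fixpt Hy))).
Qed.

Lemma homotopy_ob_tgt (y : Y) : path_tgt (homotopy_ob y) = y.
Proof. unfold homotopy_ob; destruct excluded_middle_informative; reflexivity. Qed.

Lemma homotopy_ob_arr (y : Y) : heq (path_arr (homotopy_ob y)) (eps y).
Proof.
  unfold homotopy_ob; destruct excluded_middle_informative as [Hy | _];
    [apply heq_sym, eps_fixpt, Hy | apply heq_refl].
Qed.

Lemma homotopy_ob_comm (y : Y) : homotopy_ob (ginvol Y y) = path_iota (homotopy_ob y).
Proof.
  unfold homotopy_ob.
  destruct (excluded_middle_informative (ginvol Y y = y)) as [Hy | Hy].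
  - rewrite Hy; destruct excluded_middle_informative; [|contradiction].
    simpl; rewrite Hy; reflexivity.
  - destruct excluded_middle_informative as [Hy' | _].
    { rewrite ginvolK in Hy'; congruence. }
    simpl; do 2 f_equal; [apply mkArrow_heq, eps_comm | apply side_ginvol, Hy].
Qed.

Definition homotopy_functor : Functor Y (path_gpd Y) :=
  lift_over (q := path_incl Y) (pre := fun a b chi => chi) (fun a b chi => eq_refl)
    (@path_incl_faithful Y) (V := mfun M) homotopy_ob_src.

Lemma homotopy_functor_comm :
  Fcomp homotopy_functor (ginvol Y) = Fcomp (ginvol (path_gpd Y)) homotopy_functor.
Proof.
  apply (faithful_Fcomp_inj (@path_incl_faithful Y)); [exact homotopy_ob_comm|].
  rewrite !Fcomp_assoc; unfold homotopy_functor.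
  rewrite Fcomp_lift_over, (mfun_comm M).
  rewrite path_incl_comm, <- Fcomp_assoc, Fcomp_lift_over; reflexivity.
Qed.

Lemma right_homotopic_of_nat_iso : right_homotopic M (Gid Y).
Proof.
  exists (path_gpd Y), (path_const Y), (path_ends Y).
  split; [apply path_object_path_gpd|].
  exists (Build_GMor homotopy_functor_comm).
  apply GMor_eq, Functor_eq_heq.
  - intros y; simpl; rewrite homotopy_ob_src, homotopy_ob_tgt; reflexivity.
  - intros y y' phi; simpl; apply heq_pair; [apply heq_htrans|].
    unfold path_conj.
    apply (heq_trans (heq_comp (homotopy_ob_arr y')
             (heq_comp (heq_htrans _ _ _) (heq_inv (homotopy_ob_arr y))))).
    rewrite gcomp_assoc, eps_nat, <- gcomp_assoc, ginv_r, gcomp_idr; apply heq_refl.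
Qed.

End HomotopyFromNaturalIso.

Section HomotopyInverse.

Variables (X Y : GpdInv) (f : GMor X Y).
Hypothesis Hf : weq f.
Variable fixinv : fixpt Y -> fixpt X.
Hypothesis fixmap_fixinv : forall b, fixmap f (fixinv b) = b.
Hypothesis fixinv_fixmap : forall a, fixinv (fixmap f a) = a.

Definition weak_inv (y : Y) : X := projT1 (gpd_equiv_counit Hf) y.

Definition weak_counit (y : Y) : hom Y (f (weak_inv y)) y := projT2 (gpd_equiv_counit Hf) y.

(* A fixed point goes to its fixed preimage; on a free orbit the weak inverse
   is used at the [side]-chosen point and transported to the other one. *)
Definition inv_choice (y : Y) : {x : X & hom Y (f x) y} :=
  match excluded_middle_informative (ginvol Y y = y) with
  | left Hy => existT _ (proj1_sig (fixinv (exist _ y Hy)))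
      (htrans (eq_sym (f_equal (@proj1_sig _ _) (fixmap_fixinv (exist _ y Hy))))
         eq_refl (gid y))
  | right _ =>
      if side y then existT _ (weak_inv y) (weak_counit y)
      else existT _ (ginvol X (weak_inv (ginvol Y y)))
        (htrans (eq_sym (mcomm_ob f _)) (ginvolK y)
           (fhom (ginvol Y) (weak_counit (ginvol Y y))))
  end.

Definition inv_ob (y : Y) : X := projT1 (inv_choice y).

Definition inv_counit (y : Y) : hom Y (f (inv_ob y)) y := projT2 (inv_choice y).

Lemma inv_choice_fixpt (y : Y) : ginvol Y y = y ->
  heq (inv_counit y) (gid y) /\ ginvol X (inv_ob y) = inv_ob y.
Proof.
  intros Hy; unfold inv_counit, inv_ob, inv_choice.
  destruct excluded_middle_informative as [Hy' | ]; [|contradiction]; simpl.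
  split; [apply heq_htrans | exact (proj2_sig (fixinv _))].
Qed.

Lemma inv_choice_free (y : Y) : ginvol Y y <> y ->
  inv_choice y =
  if side y then existT _ (weak_inv y) (weak_counit y)
  else existT _ (ginvol X (weak_inv (ginvol Y y)))
         (htrans (eq_sym (mcomm_ob f _)) (ginvolK y)
            (fhom (ginvol Y) (weak_counit (ginvol Y y)))).
Proof.
  intros Hy; unfold inv_choice.
  destruct excluded_middle_informative; [contradiction | reflexivity].
Qed.

Lemma inv_choice_comm (y : Y) :
  inv_ob (ginvol Y y) = ginvol X (inv_ob y) /\
  heq (inv_counit (ginvol Y y)) (fhom (ginvol Y) (inv_counit y)).
Proof.
  destruct (excluded_middle_informative (ginvol Y y = y)) as [Hy | Hy].
  - destruct (inv_choice_fixpt Hy) as [Hid Hfix].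
    split; [rewrite Hy; symmetry; exact Hfix|].
    apply (heq_trans (heq_family inv_counit Hy)), (heq_trans Hid), heq_sym.
    apply (heq_trans (heq_fhom _ Hid)).
    rewrite fhom_id; apply heq_id, Hy.
  - assert (Hy' : ginvol Y (ginvol Y y) <> ginvol Y y) by (rewrite ginvolK; congruence).
    unfold inv_ob, inv_counit; rewrite (inv_choice_free Hy), (inv_choice_free Hy'),
      (side_ginvol Hy).
    destruct (side y); simpl; (split; [rewrite ?ginvolK; reflexivity|]).
    + apply (heq_trans (heq_htrans _ _ _)), heq_fhom, (heq_family weak_counit), ginvolK.
    + apply heq_sym, (heq_trans (heq_fhom _ (heq_htrans _ _ _))), fhom_ginvolK.
Qed.

Definition inv_hom (y y' : Y) (phi : hom Y y y') : hom Y (f (inv_ob y)) (f (inv_ob y')) :=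
  gcomp (ginv (inv_counit y')) (gcomp phi (inv_counit y)).

Lemma inv_hom_id (y : Y) : inv_hom (gid y) = gid _.
Proof. unfold inv_hom; rewrite gcomp_idl, ginv_l; reflexivity. Qed.

Lemma inv_hom_comp (y y' y'' : Y) (g : hom Y y' y'') (h : hom Y y y') :
  inv_hom (gcomp g h) = gcomp (inv_hom g) (inv_hom h).
Proof.
  unfold inv_hom; rewrite !gcomp_assoc; do 2 f_equal.
  rewrite <- (gcomp_assoc _ (inv_counit y')), ginv_r, gcomp_idr; reflexivity.
Qed.

Definition inv_functor : Functor Y X :=
  lift_functor (fhom_equiv_preimage Hf) (gpd_equiv_faithful Hf) inv_hom_id inv_hom_comp.

Lemma inv_functor_comm : Fcomp inv_functor (ginvol Y) = Fcomp (ginvol X) inv_functor.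
Proof.
  apply (faithful_Fcomp_inj (gpd_equiv_faithful Hf)); [intro y; apply inv_choice_comm|].
  apply Functor_eq_heq; [intro y; simpl; f_equal; apply inv_choice_comm|].
  intros y y' phi; simpl.
  apply (fun E => heq_trans E (heq_sym (fhom_mcomm _ _))).
  rewrite !fhom_equiv_preimage; unfold inv_hom; rewrite !fhom_comp, fhom_inv.
  apply heq_comp; [apply heq_inv, inv_choice_comm|].
  apply heq_comp; [apply heq_refl | apply inv_choice_comm].
Qed.

Definition inv_mor : GMor Y X := Build_GMor inv_functor_comm.

Lemma f_inv_mor_homotopic : right_homotopic (Gcomp f inv_mor) (Gid Y).
Proof.
  apply (@right_homotopic_of_nat_iso Y (Gcomp f inv_mor) inv_counit).
  - intros y y' phi; simpl; rewrite fhom_equiv_preimage; unfold inv_hom.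
    rewrite gcomp_assoc, ginv_r, gcomp_idl; reflexivity.
  - intro y; apply inv_choice_comm.
  - intros y Hy; apply (inv_choice_fixpt Hy).
Qed.

Definition inv_unit (x : X) : hom X (inv_ob (f x)) x :=
  equiv_preimage Hf (inv_counit (f x)).

Lemma inv_ob_fixpt (x : X) : ginvol X x = x -> inv_ob (f x) = x.
Proof.
  intros Hx; unfold inv_ob, inv_choice.
  destruct excluded_middle_informative as [Hfx | Hfx].
  - assert (E : exist _ (f x) Hfx = fixmap f (exist _ x Hx)) by (apply fixpt_eq; reflexivity).
    simpl; rewrite E, fixinv_fixmap; reflexivity.
  - exfalso; apply Hfx; rewrite <- mcomm_ob, Hx; reflexivity.
Qed.

Lemma inv_mor_f_homotopic : right_homotopic (Gcomp inv_mor f) (Gid X).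
Proof.
  assert (Hff : faithful f) by exact (gpd_equiv_faithful Hf).
  apply (@right_homotopic_of_nat_iso X (Gcomp inv_mor f) inv_unit).
  - intros x x' psi; apply Hff; simpl.
    rewrite !fhom_comp; unfold inv_unit; rewrite !fhom_equiv_preimage.
    unfold inv_hom; rewrite gcomp_assoc, ginv_r, gcomp_idl; reflexivity.
  - intro x; apply (faithful_heq Hff); [simpl; rewrite mcomm_ob; apply inv_choice_comm
                                       | reflexivity |].
    unfold inv_unit; rewrite fhom_equiv_preimage.
    apply (fun E => heq_trans E (heq_sym (fhom_mcomm _ _))); rewrite fhom_equiv_preimage.
    apply (heq_trans (heq_family inv_counit (mcomm_ob f x))), inv_choice_comm.
  - intros x Hx; apply (faithful_heq Hff); [apply inv_ob_fixpt, Hx | reflexivity |].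
    unfold inv_unit; rewrite fhom_equiv_preimage, fhom_id.
    apply inv_choice_fixpt; rewrite <- mcomm_ob, Hx; reflexivity.
Qed.

End HomotopyInverse.

Lemma rhe_iff_weq_fixmap_bijective (X Y : GpdInv) (f : GMor X Y) :
  right_homotopy_equivalence f <-> weq f /\ bijection (fixmap f).
Proof.
  split.
  - intros Hrhe; split; [apply rhe_weq, Hrhe | apply rhe_fixmap_bijective, Hrhe].
  - intros [Hf (fixinv & fixinv_fixmap & fixmap_fixinv)].
    exists (inv_mor Hf fixmap_fixinv).
    split; [apply f_inv_mor_homotopic|].
    exact (inv_mor_f_homotopic Hf fixmap_fixinv fixinv_fixmap).
Qed.

Theorem theorem4p35 (G H : GpdInv) (f : GMor G H) :
  (right_homotopy_equivalence f <-> weq f /\ gpd_iso (Ffull f)) /\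
  (right_homotopy_equivalence f <-> weq f /\ gpd_iso (Ffixed f)) /\
  (right_homotopy_equivalence f <-> weq f /\ bijection (fixmap f)).
Proof.
  rewrite rhe_iff_weq_fixmap_bijective.
  split; [|split]; [| | reflexivity]; split; intros [Hf Hbij]; split; try exact Hf.
  - exact (proj2 (Ffull_iso_iff Hf) Hbij).
  - exact (proj1 (Ffull_iso_iff Hf) Hbij).
  - exact (proj2 (Ffixed_iso_iff Hf) Hbij).
  - exact (proj1 (Ffixed_iso_iff Hf) Hbij).
Qed.
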